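(* For all $\gamma'\ge\gamma>0$, $$\|\hat f_{n,\gamma'}-\hat f_{n,\gamma}\|_\infty\le\frac{2\sqrt K(\gamma'-\gamma)\sqrt{\log n}}{\gamma^{3/2}}.$$
   Context: Let $\mathcal X$ be a locally compact metric space in which every open set is $\sigma$-compact, and $\|f\|_\infty=\sup_x|f(x)|$. Let $k:\mathcal X\times\mathcal X\to\mathbb R$ be a continuous, symmetric, positive semidefinite kernel with RKHS $\mathcal H$ and $K:=\sup_xk(x,x)<\infty$; assume $k-\delta$ is positive semidefinite for some $\delta>0$, so the constant function $1_{\mathcal X}\in\mathcal H$. Data: $n\in\mathbb N$, points $X_1,\ldots,X_n\in\mathcal X$, times $T_i\in(0,\infty)$, indicators $I_i\in\{0,1\}$. Define $N_i(t)=\mathbb 1\{T_i\le t,\ I_i=0\}$, $R_i(t)=\mathbb 1\{T_i\ge t\}$, $S_n(f,t)=\frac1n\sum_{i=1}^nR_i(t)e^{f(X_i)}$, $P_n(f)=\frac1n\sum_{i=1}^nf(X_i)$, $\ell_n(f)=\frac1n\sum_{i=1}^n N_i(1)\log S_n(f,T_i)-\frac1n\sum_{i=1}^n f(X_i)N_i(1)$, for $\gamma>0$ the penalised objective $\ell_{n,\gamma}(f)=\ell_n(f)+\gamma\|f-P_n(f)1_{\mathcal X}\|_{\mathcal H}^2+\gamma P_n(f)^2$, and $\hat f_{n,\gamma}$ its unique minimiser over $f\in\mathcal H$. *)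

From HB Require Import structures.
From mathcomp Require Import all_boot all_order all_algebra.
From mathcomp Require Import all_classical all_reals all_analysis.
Set Implicit Arguments. Unset Strict Implicit. Unset Printing Implicit Defensive.
Import Order.TTheory GRing.Theory Num.Theory.
Import numFieldNormedType.Exports.
Local Open Scope classical_set_scope.
Local Open Scope ring_scope.

Section Defs.
Context {R : realType} {X : Type}.

Definition sigma_compact {T : topologicalType} (A : set T) : Prop :=
  exists C : nat -> set T, (forall m, compact (C m)) /\ A = \bigcup_m C m.

Definition psd_kernel (k : X -> X -> R) : Prop :=
  forall (m : nat) (x : 'I_m -> X) (c : 'I_m -> R),
    0 <= \sum_(i < m) \sum_(j < m) c i * c j * k (x i) (x j).

Definition is_RKHS (k : X -> X -> R) (Hs : set (X -> R))
    (ip : (X -> R) -> (X -> R) -> R) : Prop :=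
      Hs (fun _ => 0) /\
      (forall f g, Hs f -> Hs g -> Hs (fun x => f x + g x)) /\
      (forall (a : R) f, Hs f -> Hs (fun x => a * f x)) /\
      (forall f g, Hs f -> Hs g -> ip f g = ip g f) /\
      (forall a b f g h, Hs f -> Hs g -> Hs h ->
         ip (fun x => a * f x + b * g x) h = a * ip f h + b * ip g h) /\
      (forall f, Hs f -> 0 <= ip f f) /\
      (forall f, Hs f -> ip f f = 0 -> f = (fun _ => 0)) /\
      (forall u : nat -> X -> R, (forall m, Hs (u m)) ->
         (forall e : R, 0 < e -> exists N : nat, forall p q : nat,
            (N <= p)%N -> (N <= q)%N ->
            Num.sqrt (ip (fun x => u p x - u q x) (fun x => u p x - u q x)) < e) ->
         exists2 f, Hs f & forall e : R, 0 < e -> exists N : nat, forall p : nat,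
            (N <= p)%N ->
            Num.sqrt (ip (fun x => u p x - f x) (fun x => u p x - f x)) < e) /\
      (forall x, Hs (k x)) /\
      (forall f x, Hs f -> ip f (k x) = f x).

Variables (n : nat) (Xs : 'I_n -> X) (T : 'I_n -> R) (I : 'I_n -> bool).

Definition Ncount (i : 'I_n) (t : R) : R := if (T i <= t) && ~~ I i then 1 else 0.
Definition Rrisk (i : 'I_n) (t : R) : R := if t <= T i then 1 else 0.

Definition Sn (f : X -> R) (t : R) : R :=
  n%:R^-1 * \sum_(i < n) Rrisk i t * expR (f (Xs i)).

Definition Pn (f : X -> R) : R := n%:R^-1 * \sum_(i < n) f (Xs i).

Definition elln (f : X -> R) : R :=
  n%:R^-1 * \sum_(i < n) Ncount i 1 * ln (Sn f (T i))
  - n%:R^-1 * \sum_(i < n) f (Xs i) * Ncount i 1.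

Definition elln_gamma (ip : (X -> R) -> (X -> R) -> R) (gamma : R)
    (f : X -> R) : R :=
  let g := fun x => f x - Pn f in
  elln f + gamma * ip g g + gamma * (Pn f) ^+ 2.

Definition is_minimiser (Hs : set (X -> R)) (ip : (X -> R) -> (X -> R) -> R)
    (gamma : R) (fh : X -> R) : Prop :=
  Hs fh /\ forall f, Hs f -> elln_gamma ip gamma fh <= elln_gamma ip gamma f.

End Defs.

From HB Require Import structures.
From mathcomp Require Import all_boot all_order all_algebra.
From mathcomp Require Import all_classical all_reals all_analysis.
From mathcomp Require Import ring lra.
Import Order.TTheory GRing.Theory Num.Theory.
Import numFieldNormedType.Exports.
Local Open Scope classical_set_scope.
Local Open Scope ring_scope.
Set Implicit Arguments. Unset Strict Implicit.

(* Because [k - delta] is positive semidefinite, the constant [1] lies in the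
   RKHS.  Hence a minimiser satisfies [Pn f = 0], and comparing it with [0]
   gives [gamma ||f||^2 <= ln n].  Testing both minimisers against their
   midpoint and using midpoint convexity of the partial likelihood yields
     (gamma + gamma') ||f' - f||^2 <= 2 (gamma' - gamma) (||f||^2 - ||f'||^2)
                                  <= 4 (gamma' - gamma) sqrt (ln n / gamma) ||f' - f||,
   and [|h x| <= ||h|| sqrt (k x x)] turns this into the sup-norm bound. *)

Definition lincomb {R : realType} {X : Type} (a : R) (f : X -> R) (b : R)
    (g : X -> R) : X -> R :=
  fun x => a * f x + b * g x.

Lemma lincomb_subE {R : realType} {X : Type} (f g : X -> R) :
  (fun x => f x - g x) = lincomb 1 f (-1) g.
Proof. by apply: funext => x; rewrite /lincomb mul1r mulN1r. Qed.

Section RealFacts.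
Variable R : realType.

Lemma invSn_le (N p : nat) : (N <= p)%N -> (p.+1%:R : R)^-1 <= N.+1%:R^-1.
Proof. by move=> h; rewrite lef_pV2 ?posrE ?ltr0Sn // ler_nat. Qed.

Lemma exists_invSn_lt (e : R) : 0 < e -> exists N : nat, (N.+1%:R : R)^-1 < e.
Proof.
move=> e0; exists (Num.truncn (e^-1)).
rewrite -[X in _ < X]invrK ltf_pV2 ?posrE ?ltr0Sn ?invr_gt0 //.
exact: truncnS_gt.
Qed.

Lemma ler_sum_term (J : finType) (F : J -> R) (j : J) :
  (forall i, 0 <= F i) -> F j <= \sum_i F i.
Proof.
by move=> F0; rewrite (bigD1 j) //= lerDl; apply: sumr_ge0 => i _.
Qed.

Lemma expR_midpoint_le (x y : R) :
  expR (2^-1 * x + 2^-1 * y) <= 2^-1 * (expR x + expR y).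
Proof.
have half z : expR z = expR (2^-1 * z) ^+ 2.
  by rewrite expr2 -expRD; congr expR; field.
rewrite expRD [expR x]half [expR y]half.
move: (expR _) (expR _) => u v.
by have := sqr_ge0 (u - v); lra.
Qed.

(* Midpoint convexity of log-sum-exp, from AM-GM after the balancing shift [mu]. *)
Lemma ln_sum_expR_midpoint_le (J : finType) (w a b : J -> R) (j0 : J) :
  (forall j, 0 <= w j) -> 0 < w j0 ->
  ln (\sum_j w j * expR (2^-1 * a j + 2^-1 * b j)) <=
  2^-1 * ln (\sum_j w j * expR (a j)) + 2^-1 * ln (\sum_j w j * expR (b j)).
Proof.
move=> w0 wj0.
have sum_gt0 c : 0 < \sum_j w j * expR (c j).
  have c0 j : 0 <= w j * expR (c j) by rewrite mulr_ge0 ?expR_ge0.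
  apply: lt_le_trans (ler_sum_term j0 c0).
  by rewrite mulr_gt0 ?expR_gt0.
set A := \sum_j w j * expR (a j); set B := \sum_j w j * expR (b j).
pose mu := 2^-1 * (ln B - ln A).
rewrite -[X in _ <= X]expRK ler_ln ?posrE ?expR_gt0 ?sum_gt0 //.
apply: (@le_trans _ _ (\sum_j w j * (2^-1 * (expR (a j + mu) + expR (b j - mu))))).
  apply: ler_sum => j _; apply: ler_wpM2l => //.
  have -> : 2^-1 * a j + 2^-1 * b j = 2^-1 * (a j + mu) + 2^-1 * (b j - mu) by ring.
  exact: expR_midpoint_le.
have -> : \sum_j w j * (2^-1 * (expR (a j + mu) + expR (b j - mu))) =
    2^-1 * (expR (ln A + mu) + expR (ln B - mu)).
  rewrite !expRD !lnK ?posrE ?sum_gt0 // /A /B !mulr_suml -big_split /= mulr_sumr.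
  by apply: eq_bigr => j _; rewrite !expRD; ring.
have -> : ln A + mu = 2^-1 * ln A + 2^-1 * ln B by rewrite /mu; field.
have -> : ln B - mu = 2^-1 * ln A + 2^-1 * ln B by rewrite /mu; field.
by move: (expR _) => E; lra.
Qed.

Lemma linear_le_sqr_eq0 (a c : R) :
  0 <= a -> (forall t, 2 * t * c <= t ^+ 2 * a) -> c = 0.
Proof.
move=> a0 h; pose t := c / (a + 1).
have ct : c = t * (a + 1) by rewrite /t divfK // gt_eqF //; lra.
have := h t; rewrite ct => ht.
have -> : t = 0 by nra.
by rewrite mul0r.
Qed.

Lemma le_div_of_sqr_le (a b x : R) :
  0 < a -> 0 <= b -> 0 <= x -> a * x ^+ 2 <= b * x -> x <= b / a.
Proof.
move=> a0 b0 x0 h; rewrite ler_pdivlMr //.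
have [->|xn0] := eqVneq x 0; first by rewrite mul0r.
have xp : 0 < x by rewrite lt0r xn0.
by rewrite -(ler_pM2r xp) mulrAC -expr2 mulrC.
Qed.

Lemma powR_3half (g : R) : 0 < g -> g `^ (3 / 2) = g * Num.sqrt g.
Proof.
move=> g0; have g0' := ltW g0; have -> : (3 / 2 : R) = 1 + 2^-1 by field.
by rewrite powRD ?(gt_eqF g0) ?implybT // powRr1 // powR12_sqrt.
Qed.

End RealFacts.

Section CoxPartialLikelihood.
Variables (R : realType) (X : Type) (n : nat).
Variables (Xs : 'I_n -> X) (T : 'I_n -> R) (I : 'I_n -> bool).
Hypothesis n_ge1 : (1 <= n)%N.

Let n_gt0 : 0 < (n%:R : R).
Proof. by rewrite ltr0n. Qed.

Lemma Ncount_01 i t : Ncount T I i t = 0 \/ Ncount T I i t = 1.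
Proof. by rewrite /Ncount; case: ifP; [right|left]. Qed.

Lemma Sn_sumE f t :
  Sn Xs T f t = \sum_j (n%:R^-1 * Rrisk T j t) * expR (f (Xs j)).
Proof. by rewrite /Sn mulr_sumr; under eq_bigr do rewrite mulrA. Qed.

Lemma Sn_ge f i : n%:R^-1 * expR (f (Xs i)) <= Sn Xs T f (T i).
Proof.
have w0 j t : 0 <= n%:R^-1 * Rrisk T j t.
  by rewrite mulr_ge0 ?invr_ge0 ?ler0n // /Rrisk; case: ifP.
rewrite Sn_sumE; apply: le_trans (ler_sum_term i _); last first.
  by move=> j; rewrite mulr_ge0 ?expR_ge0.
by rewrite /Rrisk lexx mulr1.
Qed.

Lemma Sn_gt0 f i : 0 < Sn Xs T f (T i).
Proof.
by apply: lt_le_trans (Sn_ge f i); rewrite mulr_gt0 ?invr_gt0 ?expR_gt0.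
Qed.

Lemma elln_sumE f : elln Xs T I f =
  n%:R^-1 * \sum_i Ncount T I i 1 * (ln (Sn Xs T f (T i)) - f (Xs i)).
Proof.
rewrite /elln -mulrBr -sumrB; congr (_ * _); apply: eq_bigr => i _.
by rewrite mulrBr [f (Xs i) * _]mulrC.
Qed.

(* Each log-ratio [ln Sn(f, T_i) - f(X_i)] is at least [- ln n], since the
   risk set at [T_i] contains [i]. *)
Lemma elln_ge f : - ln (n%:R : R) <= elln Xs T I f.
Proof.
have ln_n : 0 <= ln (n%:R : R) by rewrite ln_ge0 // ler1n.
rewrite elln_sumE -[X in X <= _](mulKf (lt0r_neq0 n_gt0)).
apply: ler_wpM2l; first by rewrite invr_ge0 ler0n.
rewrite mulr_natl -[X in _ *+ X](card_ord n) -sumr_const; apply: ler_sum => i _.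
case: (Ncount_01 i 1) => ->; first by rewrite mul0r oppr_le0.
have := Sn_ge f i; rewrite -ler_ln ?posrE ?Sn_gt0 ?mulr_gt0 ?invr_gt0 ?expR_gt0 //.
by rewrite lnM ?posrE ?invr_gt0 ?expR_gt0 // lnV ?posrE // expRK; lra.
Qed.

Lemma elln0_le0 : elln Xs T I (fun _ => 0) <= 0.
Proof.
rewrite elln_sumE; apply: mulr_ge0_le0; first by rewrite invr_ge0 ler0n.
apply: sumr_le0 => i _; apply: mulr_ge0_le0.
  by case: (Ncount_01 i 1) => ->.
rewrite subr0 ln_le0 // /Sn; under eq_bigr do rewrite expR0 mulr1.
have : \sum_j Rrisk T j (T i) <= \sum_(j < n) (1 : R).
  by apply: ler_sum => j _; rewrite /Rrisk; case: ifP.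
rewrite sumr_const card_ord => hS.
rewrite -[X in _ <= X](mulVf (lt0r_neq0 n_gt0)).
by apply: ler_wpM2l; rewrite ?invr_ge0 ?ler0n.
Qed.

Lemma elln_shift c f : elln Xs T I (fun x => f x - c) = elln Xs T I f.
Proof.
rewrite !elln_sumE; congr (_ * _); apply: eq_bigr => i _; congr (_ * _).
have -> : Sn Xs T (fun x => f x - c) (T i) = expR (- c) * Sn Xs T f (T i).
  rewrite /Sn [RHS]mulrCA [in RHS]mulr_sumr; congr (_ * _); apply: eq_bigr => j _.
  by rewrite expRD; ring.
by rewrite lnM ?posrE ?expR_gt0 ?Sn_gt0 // expRK; ring.
Qed.

Lemma elln_midpoint f g : elln Xs T I (lincomb 2^-1 f 2^-1 g) <=
  2^-1 * (elln Xs T I f + elln Xs T I g).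
Proof.
rewrite !elln_sumE -mulrDr mulrCA; apply: ler_wpM2l; first by rewrite invr_ge0 ler0n.
rewrite -big_split mulr_sumr; apply: ler_sum => i _ /=.
have w0 j : 0 <= n%:R^-1 * Rrisk T j (T i).
  by rewrite mulr_ge0 ?invr_ge0 ?ler0n // /Rrisk; case: ifP.
have wi : 0 < n%:R^-1 * Rrisk T i (T i) by rewrite /Rrisk lexx mulr1 invr_gt0.
have := ln_sum_expR_midpoint_le (fun j => f (Xs j)) (fun j => g (Xs j)) w0 wi.
rewrite -!Sn_sumE [Sn _ _ (lincomb _ _ _ _) _]Sn_sumE /lincomb.
by case: (Ncount_01 i 1) => ->; lra.
Qed.

Lemma Pn_lincomb (a b : R) (f g : X -> R) :
  Pn Xs (lincomb a f b g) = a * Pn Xs f + b * Pn Xs g.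
Proof. by rewrite /Pn /lincomb big_split /= -!mulr_sumr; ring. Qed.

Lemma Pn_shift (c : R) (f : X -> R) : Pn Xs (fun x => f x - c) = Pn Xs f - c.
Proof.
rewrite /Pn sumrB mulrBr sumr_const card_ord -[c *+ n]mulr_natl mulKf //.
exact: lt0r_neq0.
Qed.

End CoxPartialLikelihood.

Section RKHS.
Variables (R : realType) (X : Type) (Hs : set (X -> R)).
Variable ip : (X -> R) -> (X -> R) -> R.
Hypothesis Hs0 : Hs (fun _ => 0).
Hypothesis HsD : forall f g, Hs f -> Hs g -> Hs (fun x => f x + g x).
Hypothesis HsZ : forall (a : R) f, Hs f -> Hs (fun x => a * f x).
Hypothesis ipC : forall f g, Hs f -> Hs g -> ip f g = ip g f.
Hypothesis ip_linear : forall a b f g h, Hs f -> Hs g -> Hs h ->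
  ip (fun x => a * f x + b * g x) h = a * ip f h + b * ip g h.
Hypothesis ip_ge0 : forall f, Hs f -> 0 <= ip f f.
Hypothesis ip_eq0 : forall f, Hs f -> ip f f = 0 -> f = (fun _ => 0).

Definition ipnorm f := Num.sqrt (ip f f).

Lemma Hs_lincomb a f b g : Hs f -> Hs g -> Hs (lincomb a f b g).
Proof. by move=> hf hg; apply: HsD; exact: HsZ. Qed.

Lemma ip0l h : Hs h -> ip (fun _ => 0) h = 0.
Proof.
move=> hh; have := ip_linear 0 0 hh hh hh; rewrite !mul0r addr0.
by under eq_fun do rewrite !mul0r addr0.
Qed.

Lemma ip_lincomb a b c d f g : Hs f -> Hs g ->
  ip (lincomb a f b g) (lincomb c f d g) =
  a * c * ip f f + (a * d + b * c) * ip f g + b * d * ip g g.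
Proof.
move=> hf hg; have hc := Hs_lincomb c d hf hg.
rewrite /lincomb ip_linear // (ipC hf hc) (ipC hg hc) !ip_linear // (ipC hg hf).
ring.
Qed.

Lemma ip_sqr_le f g : Hs f -> Hs g -> ip f g ^+ 2 <= ip f f * ip g g.
Proof.
move=> hf hg; have [g0|gn0] := eqVneq (ip g g) 0.
  by rewrite (ip_eq0 hg g0) (ipC hf Hs0) !ip0l // expr0n mulr0.
have gp : 0 < ip g g by rewrite lt0r gn0 ip_ge0.
pose t := ip f g / ip g g.
have := ip_ge0 (Hs_lincomb 1 (- t) hf hg).
rewrite ip_lincomb // => h.
have := mulr_ge0 h (ltW gp).
have -> : (1 * 1 * ip f f + (1 * - t + - t * 1) * ip f g + - t * - t * ip g g) *
  ip g g = ip f f * ip g g - ip f g ^+ 2 by rewrite /t; field.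
by rewrite subr_ge0.
Qed.

Lemma ip_norm_le f g : Hs f -> Hs g -> `|ip f g| <= ipnorm f * ipnorm g.
Proof.
move=> hf hg; rewrite -sqrtrM ?ip_ge0 // -sqrtr_sqr.
by apply: ler_wsqrtr; exact: ip_sqr_le.
Qed.

Lemma ipnormD_le f g : Hs f -> Hs g ->
  ipnorm (lincomb 1 f 1 g) <= ipnorm f + ipnorm g.
Proof.
move=> hf hg; rewrite -[X in _ <= X]ger0_norm ?addr_ge0 ?sqrtr_ge0 //.
rewrite -sqrtr_sqr; apply: ler_wsqrtr; rewrite ip_lincomb //.
have := ler_norm (ip f g); have := ip_norm_le hf hg.
rewrite sqrrD /ipnorm !sqr_sqrtr ?ip_ge0 //.
move: (ip f g) `|ip f g| (Num.sqrt _ * Num.sqrt _) => *; lra.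
Qed.

Section Minimisers.
Variables (n : nat) (Xs : 'I_n -> X) (T : 'I_n -> R) (I : 'I_n -> bool).
Hypothesis n_ge1 : (1 <= n)%N.
Hypothesis Hs1 : Hs (fun _ => 1).

Lemma elln_gamma_Pn0 gamma f : Pn Xs f = 0 ->
  elln_gamma Xs T I ip gamma f = elln Xs T I f + gamma * ip f f.
Proof.
move=> Pf; rewrite /elln_gamma /= Pf expr0n mulr0 addr0.
by congr (_ + _ * ip _ _); apply: funext => x; rewrite subr0.
Qed.

(* Shifting [f] by a constant changes [elln_gamma] only through [gamma * Pn f ^+ 2]. *)
Lemma minimiser_Pn0 gamma f : 0 < gamma ->
  is_minimiser Xs T I Hs ip gamma f -> Pn Xs f = 0.
Proof.
move=> g0 [hf f_min]; set c := Pn Xs f.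
have hfc : Hs (fun x => f x - c).
  have -> : (fun x => f x - c) = lincomb 1 f (- c) (fun _ => 1).
    by apply: funext => x; rewrite /lincomb mul1r mulr1.
  exact: Hs_lincomb.
have Pfc : Pn Xs (fun x => f x - c) = 0 by rewrite (Pn_shift Xs n_ge1) subrr.
have := f_min _ hfc; rewrite [X in _ <= X]elln_gamma_Pn0 //.
rewrite /elln_gamma /= -/c (elln_shift Xs T I n_ge1) => h.
have : gamma * c ^+ 2 <= 0 by lra.
rewrite pmulr_rle0 // => c2.
by apply/eqP; rewrite -sqrf_eq0 eq_le c2 sqr_ge0.
Qed.

Lemma minimiser_ipnorm_le gamma gamma' f : 0 < gamma -> gamma <= gamma' ->
  is_minimiser Xs T I Hs ip gamma' f ->
  ipnorm f <= Num.sqrt (ln (n%:R : R)) / Num.sqrt gamma.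
Proof.
move=> g0 gg' f_min; have g'0 := lt_le_trans g0 gg'.
have Pf := minimiser_Pn0 g'0 f_min; case: f_min => hf f_min.
have P0 : Pn Xs (fun _ : X => 0 : R) = 0 by rewrite /Pn sumr_const mul0rn mulr0.
have := f_min _ Hs0; rewrite !elln_gamma_Pn0 // ip0l // mulr0 addr0 => h.
have lf := elln_ge Xs T I n_ge1 f; have l0 := elln0_le0 Xs T I n_ge1.
have le_Q : gamma * ip f f <= gamma' * ip f f by apply: ler_wpM2r => //; exact: ip_ge0.
have le_ln : gamma * ip f f <= ln (n%:R : R) by lra.
rewrite /ipnorm -(sqrtrV (ltW g0)) -sqrtrM ?ln_ge0 ?ler1n //.
by apply: ler_wsqrtr; rewrite ler_pdivlMr // mulrC.
Qed.

Lemma minimisers_energy gamma gamma' f f' : 0 < gamma -> gamma <= gamma' ->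
  is_minimiser Xs T I Hs ip gamma f -> is_minimiser Xs T I Hs ip gamma' f' ->
  (gamma + gamma') * ip (lincomb 1 f' (-1) f) (lincomb 1 f' (-1) f) <=
  2 * (gamma' - gamma) * (ip f f - ip f' f').
Proof.
move=> g0 gg' f_min f'_min; have g'0 := lt_le_trans g0 gg'.
have Pf := minimiser_Pn0 g0 f_min; have Pf' := minimiser_Pn0 g'0 f'_min.
case: f_min => hf f_min; case: f'_min => hf' f'_min.
have hm := Hs_lincomb 2^-1 2^-1 hf hf'.
have Pm : Pn Xs (lincomb 2^-1 f 2^-1 f') = 0 by rewrite Pn_lincomb Pf Pf' !mulr0 addr0.
have := f_min _ hm; have := f'_min _ hm.
rewrite !elln_gamma_Pn0 // !ip_lincomb // (ipC hf' hf).
have := elln_midpoint Xs T I n_ge1 f f'; lra.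
Qed.

Lemma minimisers_ipnorm_sub_le gamma gamma' f f' : 0 < gamma -> gamma <= gamma' ->
  is_minimiser Xs T I Hs ip gamma f -> is_minimiser Xs T I Hs ip gamma' f' ->
  ipnorm (lincomb 1 f' (-1) f) <=
  2 * (gamma' - gamma) * Num.sqrt (ln (n%:R : R)) / gamma `^ (3 / 2).
Proof.
move=> g0 gg' f_min f'_min.
have energy := minimisers_energy g0 gg' f_min f'_min.
have q_le := minimiser_ipnorm_le g0 (lexx gamma) f_min.
have q'_le := minimiser_ipnorm_le g0 gg' f'_min.
case: f_min => hf _; case: f'_min => hf' _.
have hd := Hs_lincomb 1 (-1) hf' hf; have hs := Hs_lincomb 1 1 hf' hf.
set d := lincomb 1 f' (-1) f in energy hd *.
set rho := Num.sqrt (ln (n%:R : R)) / Num.sqrt gamma in q_le q'_le.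
have rho0 : 0 <= rho := le_trans (sqrtr_ge0 _) q_le.
have diff_le : ip f f - ip f' f' <= ipnorm d * (2 * rho).
  have -> : ip f f - ip f' f' = - ip d (lincomb 1 f' 1 f) by rewrite ip_lincomb //; ring.
  apply: le_trans (ler_norm _) _; rewrite normrN.
  apply: le_trans (ip_norm_le hd hs) _; apply: ler_wpM2l; first exact: sqrtr_ge0.
  by apply: le_trans (ipnormD_le hf' hf) _; lra.
have sg : 0 < Num.sqrt gamma by rewrite sqrtr_gt0.
have -> : 2 * (gamma' - gamma) * Num.sqrt (ln (n%:R : R)) / gamma `^ (3 / 2) =
    4 * (gamma' - gamma) * rho / (2 * gamma).
  by rewrite powR_3half // /rho; field; rewrite !gt_eqF.
apply: le_div_of_sqr_le; rewrite ?mulr_gt0 ?mulr_ge0 ?subr_ge0 ?sqrtr_ge0 //.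
apply: le_trans (_ : _ <= (gamma + gamma') * ipnorm d ^+ 2) _.
  by rewrite ler_wpM2r ?sqr_ge0 //; lra.
rewrite sqr_sqrtr ?ip_ge0 //; apply: le_trans energy _.
have -> : 4 * (gamma' - gamma) * rho * ipnorm d =
  2 * (gamma' - gamma) * (ipnorm d * (2 * rho)) by ring.
by apply: ler_wpM2l; rewrite ?mulr_ge0 ?subr_ge0.
Qed.

End Minimisers.

Section Reproducing.
Variable k : X -> X -> R.
Hypothesis Hs_k : forall x, Hs (k x).
Hypothesis ip_k : forall f x, Hs f -> ip f (k x) = f x.

Lemma eval_le f x : Hs f -> `|f x| <= ipnorm f * Num.sqrt (k x x).
Proof.
by move=> hf; rewrite -ip_k // -[k x x]ip_k //; exact: ip_norm_le.
Qed.

Section ConstantInRKHS.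
Variable delta : R.
Hypothesis delta_gt0 : 0 < delta.
Hypothesis k_sym : forall x y, k x y = k y x.
Hypothesis k_delta_psd : psd_kernel (fun x y => k x y - delta).
Hypothesis Hs_complete : forall u : nat -> X -> R, (forall m, Hs (u m)) ->
  (forall e : R, 0 < e -> exists N : nat, forall p q : nat,
     (N <= p)%N -> (N <= q)%N ->
     Num.sqrt (ip (fun x => u p x - u q x) (fun x => u p x - u q x)) < e) ->
  exists2 f, Hs f & forall e : R, 0 < e -> exists N : nat, forall p : nat,
     (N <= p)%N ->
     Num.sqrt (ip (fun x => u p x - f x) (fun x => u p x - f x)) < e.

(* The pairs [(h, <h, 1>)] for [h] in the span of the kernel sections,
   described without knowing yet that [1] belongs to [Hs]. *)
Inductive kcomb : (X -> R) -> R -> Prop :=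
  | kcomb0 : kcomb (fun _ => 0) 0
  | kcombS h l t z : kcomb h l -> kcomb (fun y => h y + t * k z y) (l + t).

Definition ksum m (a : nat -> R) (x : nat -> X) : X -> R :=
  fun y => \sum_(i < m) a i * k (x i) y.

Lemma ksumS m a x : ksum m.+1 a x = lincomb 1 (ksum m a x) (a m) (k (x m)).
Proof. by apply: funext => y; rewrite /ksum /lincomb big_ord_recr mul1r. Qed.

Lemma ksum0 a x : ksum 0 a x = fun _ => 0.
Proof. by apply: funext => y; rewrite /ksum big_ord0. Qed.

Lemma Hs_ksum m a x : Hs (ksum m a x).
Proof.
by elim: m => [|m IH]; rewrite ?ksum0 ?ksumS //; exact: Hs_lincomb.
Qed.

Lemma ip_ksuml m a x h : Hs h ->
  ip (ksum m a x) h = \sum_(i < m) a i * h (x i).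
Proof.
move=> hh; elim: m => [|m IH]; first by rewrite ksum0 ip0l // big_ord0.
rewrite ksumS /lincomb ip_linear //; last exact: Hs_ksum.
by rewrite IH big_ord_recr /= mul1r ipC ?ip_k.
Qed.

Lemma ip_ksum m a x : ip (ksum m a x) (ksum m a x) =
  \sum_(i < m) \sum_(j < m) a i * a j * k (x i) (x j).
Proof.
rewrite (ip_ksuml _ _ _ (Hs_ksum m a x)); apply: eq_bigr => i _.
by rewrite /ksum /= mulr_sumr; apply: eq_bigr => j _; rewrite mulrA k_sym.
Qed.

(* [X] may be empty: the point [z0] only fills the unused values of [x]. *)
Lemma kcomb_ksum h l (z0 : X) : kcomb h l ->
  exists m a x, h = ksum m a x /\ l = \sum_(i < m) a i.
Proof.
elim=> [|{}h {}l t z _ [m [a [x [-> ->]]]]].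
  by exists 0%N, (fun _ => 0), (fun _ => z0); rewrite ksum0 big_ord0.
exists m.+1, (fun i => if i == m then t else a i),
  (fun i => if i == m then z else x i).
rewrite ksumS big_ord_recr /= eqxx /lincomb /ksum; split.
  apply: funext => y; rewrite mul1r; congr (_ + _); apply: eq_bigr => i _.
  by rewrite (ltn_eqF (ltn_ord i)).
by congr (_ + _); apply: eq_bigr => i _; rewrite (ltn_eqF (ltn_ord i)).
Qed.

Lemma Hs_kcomb h l : kcomb h l -> Hs h.
Proof. by elim=> // {}h {}l t z _ hh; apply: HsD => //; exact: HsZ. Qed.

Lemma kcombZ c h l : kcomb h l -> kcomb (fun y => c * h y) (c * l).
Proof.
elim=> [|{}h {}l t z _ IH].
  by have := kcomb0; congr kcomb; [apply: funext => y|]; rewrite mulr0.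
have := kcombS (c * t) z IH; congr kcomb; last by rewrite mulrDr.
by apply: funext => y; rewrite mulrDr mulrA.
Qed.

Lemma kcombD h l h' l' : kcomb h l -> kcomb h' l' ->
  kcomb (fun y => h y + h' y) (l + l').
Proof.
move=> hl; elim=> [|{}h' {}l' t z _ IH].
  by have := hl; congr kcomb; [apply: funext => y|]; rewrite addr0.
have := kcombS t z IH; congr kcomb; last by rewrite addrA.
by apply: funext => y; rewrite addrA.
Qed.

Lemma kcomb_lincomb a b h l h' l' : kcomb h l -> kcomb h' l' ->
  kcomb (lincomb a h b h') (a * l + b * l').
Proof. by move=> hl hl'; apply: kcombD; exact: kcombZ. Qed.

Lemma kcomb_sqr_le h l : kcomb h l -> delta * l ^+ 2 <= ip h h.
Proof.
case=> [|h0 l0 t z hl0]; first by rewrite ip0l // expr0n mulr0.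
have [m [a [x [-> ->]]]] := kcomb_ksum z (kcombS t z hl0).
rewrite ip_ksum -subr_ge0; have := k_delta_psd (fun i : 'I_m => x i) (fun i => a i).
congr (0 <= _); rewrite expr2 mulr_suml mulr_sumr -sumrB; apply: eq_bigr => i _.
by rewrite !mulr_sumr -sumrB; apply: eq_bigr => j _; ring.
Qed.

(* Equals [<1, 1> - <h - 1, h - 1>] once [1] is in [Hs], so [1] is found as
   the limit of a maximising sequence. *)
Definition kgain h l := 2 * l - ip h h.

Lemma kgain_le h l : kcomb h l -> kgain h l <= delta^-1.
Proof.
move=> hl; have := kcomb_sqr_le hl.
have di : 0 <= delta^-1 by rewrite invr_ge0 ltW.
have := mulr_ge0 di (sqr_ge0 (1 - delta * l)).
have -> : delta^-1 * (1 - delta * l) ^+ 2 = delta^-1 - 2 * l + delta * l ^+ 2.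
  by field; rewrite gt_eqF.
rewrite /kgain; lra.
Qed.

Lemma exists_kgain_maximising :
  exists (u : nat -> X -> R) (l : nat -> R), (forall p, kcomb (u p) (l p)) /\
  forall p h l', kcomb h l' -> kgain h l' < kgain (u p) (l p) + p.+1%:R^-1.
Proof.
pose S := [set v : R | exists h l, kcomb h l /\ v = kgain h l].
have hsup : has_sup S.
  split; first by exists (kgain (fun _ => 0) 0), (fun _ => 0), 0; split => //; exact: kcomb0.
  by exists delta^-1 => v [h [l [hl ->]]]; exact: kgain_le.
have near_sup p : exists hl : (X -> R) * R,
    kcomb hl.1 hl.2 /\ sup S - p.+1%:R^-1 < kgain hl.1 hl.2.
  have ep : 0 < (p.+1%:R : R)^-1 by rewrite invr_gt0 ltr0Sn.
  have [v [h [l [hl ->]]] hv] := sup_adherent ep hsup.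
  by exists (h, l).
have [F hF] := choice near_sup.
exists (fun p => (F p).1), (fun p => (F p).2); split => [p|p h l hl].
  exact: (hF p).1.
have := sup_upper_bound hsup (ex_intro _ h (ex_intro _ l (conj hl erefl))).
have := (hF p).2; move: (sup S) (p.+1%:R^-1 : R) => s e /=; lra.
Qed.

Section MaximisingSequence.
Variables (u : nat -> X -> R) (l : nat -> R).
Hypothesis kcomb_u : forall p, kcomb (u p) (l p).
Hypothesis u_max : forall p h l', kcomb h l' ->
  kgain h l' < kgain (u p) (l p) + p.+1%:R^-1.

Let Hs_u p : Hs (u p) := Hs_kcomb (kcomb_u p).

(* Parallelogram law applied to the midpoint of [u p] and [u q]. *)
Lemma maximising_cauchy p q :
  ip (lincomb 1 (u p) (-1) (u q)) (lincomb 1 (u p) (-1) (u q)) <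
  2 * (p.+1%:R^-1 + q.+1%:R^-1).
Proof.
have hm := kcomb_lincomb 2^-1 2^-1 (kcomb_u p) (kcomb_u q).
have := u_max p hm; have := u_max q hm.
rewrite /kgain !ip_lincomb //.
move: (p.+1%:R^-1 : R) (q.+1%:R^-1 : R) => ep eq; lra.
Qed.

Lemma maximising_perturb p t z :
  2 * t * (1 - u p z) < p.+1%:R^-1 + t ^+ 2 * k z z.
Proof.
have := u_max p (kcombS t z (kcomb_u p)).
have -> : (fun y => u p y + t * k z y) = lincomb 1 (u p) t (k z).
  by apply: funext => y; rewrite /lincomb mul1r.
rewrite /kgain ip_lincomb // ip_k // -[k z z]ip_k //.
move: (p.+1%:R^-1 : R) => ep; lra.
Qed.

Lemma maximising_limit_eq1 g : Hs g ->
  (forall e, 0 < e -> exists N : nat, forall p, (N <= p)%N ->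
     ipnorm (lincomb 1 (u p) (-1) g) < e) ->
  g = fun _ => 1.
Proof.
move=> hg conv; apply: funext => z.
have kzz0 : 0 <= k z z by rewrite -ip_k //; exact: ip_ge0.
have conv_z e : 0 < e -> exists N : nat, forall p, (N <= p)%N -> `|u p z - g z| < e.
  move=> e0; have s1 : 0 < Num.sqrt (k z z) + 1 by rewrite ltr_wpDl ?sqrtr_ge0.
  have [N hN] := conv (e / (Num.sqrt (k z z) + 1)) (divr_gt0 e0 s1).
  exists N => p hp; have := eval_le z (Hs_lincomb 1 (-1) (Hs_u p) hg).
  rewrite /lincomb mul1r mulN1r => /le_lt_trans; apply.
  apply: le_lt_trans (_ : _ <= ipnorm (lincomb 1 (u p) (-1) g) * (Num.sqrt (k z z) + 1)) _.
    by rewrite ler_wpM2l ?sqrtr_ge0 // lerDl.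
  by rewrite -ltr_pdivlMr //; exact: hN.
suff : 1 - g z = 0 by lra.
apply: (linear_le_sqr_eq0 kzz0) => t; apply/ler_addgt0Pr => e e0.
have b0 : 0 < 2 * (`|2 * t| + 1) by rewrite mulr_gt0 ?ltr_wpDl.
have [N1 hN1] := conv_z (e / (2 * (`|2 * t| + 1))) (divr_gt0 e0 b0).
have [N2 hN2] := exists_invSn_lt (divr_gt0 e0 (ltr0Sn R 1)).
pose p := maxn N1 N2.
have h1 := hN1 p (leq_maxl N1 N2).
have h2 := invSn_le R (leq_maxr N1 N2).
have h3 := maximising_perturb p t z.
have h4 : 2 * t * (u p z - g z) <= `|2 * t| * `|u p z - g z|.
  by rewrite -normrM ler_norm.
have h5 : `|2 * t| * `|u p z - g z| <= (`|2 * t| + 1) * (e / (2 * (`|2 * t| + 1))).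
  by apply: ler_pM; rewrite ?normr_ge0 ?lerDl // ltW.
have h6 : (`|2 * t| + 1) * (e / (2 * (`|2 * t| + 1))) = e / 2.
  by field; rewrite gt_eqF ?ltr_wpDl.
move: h2 h3 hN2; move: (p.+1%:R^-1 : R) (N2.+1%:R^-1 : R) => ep eN *; lra.
Qed.

End MaximisingSequence.

Lemma one_in_Hs : Hs (fun _ => 1).
Proof.
have [u [l [kcomb_u u_max]]] := exists_kgain_maximising.
have Hs_u p : Hs (u p) := Hs_kcomb (kcomb_u p).
have u_cauchy e : 0 < e -> exists N : nat, forall p q, (N <= p)%N -> (N <= q)%N ->
    Num.sqrt (ip (fun x => u p x - u q x) (fun x => u p x - u q x)) < e.
  move=> e0; have e0' := ltW e0.
  have [N hN] := exists_invSn_lt (divr_gt0 (mulr_gt0 e0 e0) (ltr0Sn R 3)).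
  exists N => p q hp hq.
  rewrite lincomb_subE -(ltr_pXn2r (n := 2)) ?nnegrE ?sqrtr_ge0 //.
  rewrite sqr_sqrtr; last exact/ip_ge0/Hs_lincomb.
  have := maximising_cauchy kcomb_u u_max p q.
  have := invSn_le R hp; have := invSn_le R hq; rewrite expr2.
  move: (p.+1%:R^-1 : R) (q.+1%:R^-1 : R) (N.+1%:R^-1 : R) hN => a b c; lra.
have [g hg conv] := Hs_complete Hs_u u_cauchy.
have conv' e : 0 < e -> exists N : nat, forall p, (N <= p)%N ->
    ipnorm (lincomb 1 (u p) (-1) g) < e.
  by move=> /conv [N hN]; exists N => p; rewrite -lincomb_subE; exact: hN.
by rewrite -(maximising_limit_eq1 kcomb_u u_max hg conv').
Qed.

Lemma minimisers_eval_sub_le n (Xs : 'I_n -> X) T I gamma gamma' f f' x :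
  (1 <= n)%N -> 0 < gamma -> gamma <= gamma' ->
  is_minimiser Xs T I Hs ip gamma f -> is_minimiser Xs T I Hs ip gamma' f' ->
  `|f' x - f x| <= 2 * (gamma' - gamma) * Num.sqrt (ln (n%:R : R))
    / gamma `^ (3 / 2) * Num.sqrt (k x x).
Proof.
move=> n_ge1 g0 gg' f_min f'_min.
have hd : Hs (lincomb 1 f' (-1) f).
  by case: f_min => hf _; case: f'_min => hf' _; exact: Hs_lincomb.
have -> : f' x - f x = lincomb 1 f' (-1) f x by rewrite /lincomb mul1r mulN1r.
apply: le_trans (eval_le x hd) _; apply: ler_wpM2r; first exact: sqrtr_ge0.
exact (minimisers_ipnorm_sub_le n_ge1 one_in_Hs g0 gg' f_min f'_min).
Qed.

End ConstantInRKHS.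
End Reproducing.
End RKHS.

Theorem mainTheorem14 (R : realType) (X : metricType R)
  (k : X -> X -> R) (Hs : set (X -> R)) (ip : (X -> R) -> (X -> R) -> R)
  (K delta : R) (n : nat) (Xs : 'I_n -> X) (T : 'I_n -> R) (I : 'I_n -> bool)
  (gamma gamma' : R) (fh fh' : X -> R) :
  locally_compact [set: X] ->
  (forall A : set X, open A -> sigma_compact A) ->
  continuous (fun p : X * X => k p.1 p.2) ->
  (forall x y, k x y = k y x) ->
  psd_kernel k ->
  is_RKHS k Hs ip ->
  has_ubound (range (fun x => k x x)) ->
  K = sup (range (fun x => k x x)) ->
  0 < delta -> psd_kernel (fun x y => k x y - delta) ->
  (1 <= n)%N ->
  (forall i, 0 < T i) ->
  0 < gamma -> gamma <= gamma' ->
  is_minimiser Xs T I Hs ip gamma fh ->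
  is_minimiser Xs T I Hs ip gamma' fh' ->
  forall x : X,
    `|fh' x - fh x| <=
      2 * Num.sqrt K * (gamma' - gamma) * Num.sqrt (ln (n%:R : R))
      / (gamma `^ (3 / 2)).
Proof.
move=> _ _ _ k_sym _ RKHS k_bounded K_sup delta_gt0 k_delta_psd n_ge1 _ g0 gg'
  fh_min fh'_min x.
case: RKHS => [Hs0 [HsD [HsZ [ipC [ip_linear [ip_ge0 [ip_eq0
  [Hs_complete [Hs_k ip_k]]]]]]]]].
have := minimisers_eval_sub_le Hs0 HsD HsZ ipC ip_linear ip_ge0 ip_eq0 Hs_k ip_k
  delta_gt0 k_sym k_delta_psd Hs_complete x n_ge1 g0 gg' fh_min fh'_min.
move=> /le_trans; apply.
have kxx_le : k x x <= K by rewrite K_sup; apply: (ub_le_sup k_bounded); exists x.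
have -> : 2 * Num.sqrt K * (gamma' - gamma) * Num.sqrt (ln (n%:R : R))
    / gamma `^ (3 / 2) =
  2 * (gamma' - gamma) * Num.sqrt (ln (n%:R : R)) / gamma `^ (3 / 2) * Num.sqrt K.
  by ring.
apply: ler_wpM2l; last exact: ler_wsqrtr.
by rewrite !mulr_ge0 ?invr_ge0 ?powR_ge0 ?sqrtr_ge0 ?subr_ge0.
Qed.
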